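(* Let $p$ be an odd prime, $R=F_p+vF_p$ with $v^2=v$, $\theta=\lambda+v\mu$ ($\lambda,\mu\in F_p$) a unit of $R$, and let $C$ be a $\theta$-constacyclic code of length $n$ over $R$ with generating set in standard form $\{vg_{1-v}(x),(1-v)g_v(x)\}$. Then: (1) $C^\perp=\langle vh_{1-v}^*(x),(1-v)h_v^*(x)\rangle$ and $|C^\perp|=p^{\deg(g_{1-v}(x))+\deg(g_v(x))}$; (2) $C^\perp=\langle vh_{1-v}^*(x)+(1-v)h_v^*(x)\rangle$; (3) $\phi_\theta(C^\perp)\subseteq\langle h_{1-v}^*(x)h_v^*(x)\rangle$.
   Context: A $\theta$-constacyclic code of length $n$ over $R$ is an $R$-submodule of $R^n$ closed under $(c_0,\dots,c_{n-1})\mapsto(\theta c_{n-1},c_0,\dots,c_{n-2})$, identified with an ideal of $R[x]/\langle x^n-\theta\rangle$ via $(c_i)\mapsto\sum c_ix^i$ (and likewise $C^\perp$, a $\theta^{-1}$-constacyclic code, with an ideal of $R[x]/\langle x^n-\theta^{-1}\rangle$); $\langle\cdot\rangle$ denotes the generated ideal. $C^\perp$ is the dual with respect to the standard Euclidean inner product on $R^n$. A set $\{vg_1(x),(1-v)g_2(x)\}$ is a generating set in standard form for $C$ if it generates $C$, each $g_i\in F_p[x]$ is monic or $0$, $g_1\mid x^n-(\lambda+\mu)$ if $g_1\ne0$, and $g_2\mid x^n-\lambda$ if $g_2\ne0$. Let $h_{1-v}(x),h_v(x)\in F_p[x]$ be defined by $g_{1-v}(x)h_{1-v}(x)=x^n-(\lambda+\mu)$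 and $g_v(x)h_v(x)=x^n-\lambda$; for $h\in\{h_{1-v},h_v\}$ put $\widetilde h(x)=x^{\deg h}h(1/x)$ and $h^*(x)=\frac{1}{h(0)}\widetilde h(x)$. The polynomial Gray map $\phi_\theta$ sends $f(x)=r(x)+vq(x)$ ($r,q\in F_p[x]$ of degree $<n$) to $\lambda(\lambda+\mu)q(x)+x^n[-\mu r(x)-(\lambda+\mu)q(x)]\in F_p[x]/\langle x^{2n}-1\rangle$. *)

From HB Require Import structures.
From mathcomp Require Import all_boot all_order all_algebra.
From mathcomp Require Import ring.
Set Implicit Arguments. Unset Strict Implicit. Unset Printing Implicit Defensive.
Import Order.TTheory GRing.Theory.
Local Open Scope ring_scope.

(* The ring R = F_p + v F_p with v^2 = v.  An element MkRv r q stands for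
   r + v q  (r, q in F_p). *)
Section RvDef.
Variable p : nat.

Record Rv := MkRv { rp : 'F_p ; vp : 'F_p }.

Definition Rv_to (x : Rv) : 'F_p * 'F_p := (rp x, vp x).
Definition Rv_of (x : 'F_p * 'F_p) : Rv := MkRv x.1 x.2.
Lemma Rv_toK : cancel Rv_to Rv_of. Proof. by case. Qed.

HB.instance Definition _ := Equality.copy Rv (can_type Rv_toK).
HB.instance Definition _ := Choice.copy Rv (can_type Rv_toK).
HB.instance Definition _ := Countable.copy Rv (can_type Rv_toK).
HB.instance Definition _ := Finite.copy Rv (can_type Rv_toK).

Definition Rv0 := MkRv 0 0.
Definition Rv1 := MkRv 1 0.
Definition Rvadd (x y : Rv) := MkRv (rp x + rp y) (vp x + vp y).
Definition Rvopp (x : Rv) := MkRv (- rp x) (- vp x).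
(* (r1 + v q1)(r2 + v q2) = r1 r2 + v (r1 q2 + q1 r2 + q1 q2), using v^2 = v *)
Definition Rvmul (x y : Rv) :=
  MkRv (rp x * rp y) (rp x * vp y + vp x * rp y + vp x * vp y).

Lemma Rv_eq (x y : Rv) : rp x = rp y -> vp x = vp y -> x = y.
Proof. by case: x; case: y => ? ? ? ? /= -> ->. Qed.

Lemma RvaddA : associative Rvadd.
Proof. by move=> x y z; apply: Rv_eq; rewrite /= addrA. Qed.
Lemma RvaddC : commutative Rvadd.
Proof. by move=> x y; apply: Rv_eq; rewrite /= addrC. Qed.
Lemma Rvadd0 : left_id Rv0 Rvadd.
Proof. by move=> x; apply: Rv_eq; rewrite /= add0r. Qed.
Lemma RvaddN : left_inverse Rv0 Rvopp Rvadd.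
Proof. by move=> x; apply: Rv_eq; rewrite /= addNr. Qed.

HB.instance Definition _ := GRing.isZmodule.Build Rv RvaddA RvaddC Rvadd0 RvaddN.

Lemma RvmulA : associative Rvmul.
Proof. by move=> x y z; apply: Rv_eq => /=; ring. Qed.
Lemma RvmulC : commutative Rvmul.
Proof. by move=> x y; apply: Rv_eq => /=; ring. Qed.
Lemma Rvmul1 : left_id Rv1 Rvmul.
Proof. by move=> x; apply: Rv_eq => /=; ring. Qed.
Lemma RvmulDl : left_distributive Rvmul Rvadd.
Proof. by move=> x y z; apply: Rv_eq => /=; ring. Qed.
Lemma Rv1_neq0 : Rv1 != Rv0.
Proof. by apply/eqP => -[] /eqP; rewrite oner_eq0. Qed.

HB.instance Definition _ :=
  GRing.Zmodule_isComNzRing.Build Rv RvmulA RvmulC Rvmul1 RvmulDl Rv1_neq0.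

Definition vR : Rv := MkRv 0 1.
Definition embR (a : 'F_p) : Rv := MkRv a 0.

End RvDef.

Arguments vR {p}.

Definition liftR (p : nat) (g : {poly 'F_p}) : {poly Rv p} := map_poly (@embR p) g.

Definition vpoly (R : nzRingType) (n : nat) (c : 'rV[R]_n) : {poly R} :=
  \sum_(i < n) c ord0 i *: 'X^i.

(* P lies in the ideal <S> of R[x]/<f>, where P (of degree < deg f) is viewed
   as a residue class: P = sum_i a_i S_i + q f for some polynomials a_i, q. *)
Definition in_ideal (R : comNzRingType) (f : {poly R}) (S : seq {poly R})
    (P : {poly R}) : Prop :=
  exists (a : nat -> {poly R}) (q : {poly R}),
    P = \sum_(i < size S) a i * S`_i + q * f.

(* theta-constacyclic shift (c_0,...,c_{n-1}) |-> (theta c_{n-1}, c_0, ..., c_{n-2}) *)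
Definition cshift (R : nzRingType) (n : nat) (theta : R) (c : 'rV[R]_n) : 'rV[R]_n :=
  \row_(i < n) ((if val i == 0%N then theta else 1) * c ord0 (ord_pred i)).

Definition constacyclic (p n : nat) (theta : Rv p) (C : {set 'rV[Rv p]_n}) : Prop :=
  [/\ 0 \in C,
      (forall c d, c \in C -> d \in C -> c + d \in C),
      (forall (r : Rv p) c, c \in C -> r *: c \in C) &
      (forall c, c \in C -> cshift theta c \in C)].

Definition dualcode (p n : nat) (C : {set 'rV[Rv p]_n}) : {set 'rV[Rv p]_n} :=
  [set c : 'rV[Rv p]_n | [forall d : 'rV[Rv p]_n,
     (d \in C) ==> (\sum_(i < n) c ord0 i * d ord0 i == 0)]].

Definition recip (F : nzRingType) (h : {poly F}) : {poly F} :=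
  \poly_(i < size h) h`_((size h).-1 - i).

Definition hstar (p : nat) (h : {poly 'F_p}) : {poly 'F_p} := (h`_0)^-1 *: recip h.

Definition gray (p n : nat) (lam mu : 'F_p) (c : 'rV[Rv p]_n) : {poly 'F_p} :=
  let r := \sum_(i < n) rp (c ord0 i) *: 'X^i in
  let q := \sum_(i < n) vp (c ord0 i) *: 'X^i in
  (lam * (lam + mu)) *: q + 'X^n * (- (mu *: r) - (lam + mu) *: q).

From HB Require Import structures.
From mathcomp Require Import all_boot all_order all_algebra.
From mathcomp Require Import ring zify.
Import GRing.Theory.
Local Open Scope ring_scope.
Set Implicit Arguments. Unset Strict Implicit.

(* The ring morphisms R -> F_p sending v to 1 and to 0 identify
   R with F_p x F_p, so C is the product of the (lam+mu)-constacyclic code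
   <g1> and the lam-constacyclic code <g2> over F_p, and its dual is the
   product of their duals.  Over a field, if g h = x^n - c with c != 0, then
   u is orthogonal to all multiples of g iff U(x) is a multiple of the
   reciprocal of h: the dot product u.w is the coefficient of x^(n-1) in
   U(x) x^(n-1) W(1/x), and recip(g) recip(h) = 1 - c x^n.  Counting these
   multiples gives |C^perp|.  For the Gray image, phi(c) equals
   -(lam+mu) a H1 (x^n - lam) + lam b H2 (x^n - (lam+mu)) with Hi = hstar hi,
   and x^n - lam lies in the ideal generated by x^n - lam^-1 (a multiple of
   H2) and x^(2n) - 1. *)

Section RevPoly.
Variable F : comNzRingType.
Implicit Types P Q A B : {poly F}.

Definition rev_poly (N : nat) P : {poly F} := \poly_(i < N) P`_(N.-1 - i).

Lemma recip_rev_poly P : recip P = rev_poly (size P) P.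
Proof. by []. Qed.

Lemma coef_rev_poly N P i : (rev_poly N P)`_i = if (i < N)%N then P`_(N.-1 - i) else 0.
Proof. exact: coef_poly. Qed.

Lemma rev_polyD N P Q : rev_poly N (P + Q) = rev_poly N P + rev_poly N Q.
Proof. by apply/polyP=> i; rewrite coefD !coef_rev_poly coefD; case: ifP; rewrite ?addr0. Qed.

Lemma rev_polyZ N c P : rev_poly N (c *: P) = c *: rev_poly N P.
Proof. by apply/polyP=> i; rewrite coefZ !coef_rev_poly coefZ; case: ifP; rewrite ?mulr0. Qed.

Lemma size_recip P : P`_0 != 0 -> size (recip P) = size P.
Proof. by move=> P0; rewrite size_poly_eq // subnn. Qed.

HB.instance Definition _ N := GRing.isSemilinear.Build F {poly F} {poly F} _
  (rev_poly N) (rev_polyZ N, rev_polyD N).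

Lemma size_rev_poly N P : (size (rev_poly N P) <= N)%N.
Proof. exact: size_poly. Qed.

Lemma rev_polyXn N j : (j < N)%N -> rev_poly N 'X^j = 'X^(N.-1 - j).
Proof.
move=> jN; apply/polyP=> i; rewrite coef_rev_poly !coefXn.
by case: ltnP => iN; do 2?case: eqP => //; lia.
Qed.

Lemma rev_polyM A B a b : (size A <= a)%N -> (size B <= b)%N ->
  rev_poly (a + b).-1 (A * B) = rev_poly a A * rev_poly b B.
Proof.
have polyE (C : {poly F}) c : (size C <= c)%N -> C = \sum_(j < c) C`_j *: 'X^j.
  by move=> sC; rewrite -poly_def -{1}(take_poly_id sC).
move=> sA sB; rewrite [in LHS](polyE _ _ sA) [in LHS](polyE _ _ sB).
rewrite [in RHS](polyE _ _ sA) [in RHS](polyE _ _ sB) mulr_suml !linear_sum /= mulr_suml.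
apply: eq_bigr => j _; rewrite !mulr_sumr linear_sum; apply: eq_bigr => k _ /=.
rewrite -scalerAl -scalerAr -exprD !linearZ /= -scalerAl -scalerAr.
have ja := ltn_ord j; have kb := ltn_ord k.
rewrite !rev_polyXn -?exprD; try lia.
by congr (_ *: (_ *: _ ^+ _)); lia.
Qed.

End RevPoly.

Lemma vpoly_rVpoly (R : nzRingType) n (c : 'rV[R]_n) : vpoly c = rVpoly c.
Proof.
rewrite [in RHS](row_sum_delta c) linear_sum /vpoly.
by apply: eq_bigr => i _; rewrite linearZ /= rVpoly_delta.
Qed.

Lemma size_rVpoly (R : nzRingType) n (u : 'rV[R]_n) : (size (rVpoly u) <= n)%N.
Proof. exact: size_poly. Qed.

Definition dot (R : nzRingType) n (u w : 'rV[R]_n) := \sum_(i < n) u 0 i * w 0 i.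

Lemma rmorph_dot (R S : nzRingType) (f : {rmorphism R -> S}) n (u w : 'rV[R]_n) :
  f (dot u w) = dot (map_mx f u) (map_mx f w).
Proof. by rewrite rmorph_sum; apply: eq_bigr => i _; rewrite rmorphM !mxE. Qed.

Lemma map_rVpoly (R S : nzRingType) (f : {rmorphism R -> S}) n (c : 'rV[R]_n) :
  map_poly f (rVpoly c) = rVpoly (map_mx f c).
Proof.
apply/polyP=> i; rewrite coef_map !coef_rVpoly.
by case: insubP => [j _ _|_]; [rewrite mxE; reflexivity | exact: raddf0].
Qed.

Section FieldFacts.
Variable F : fieldType.
Implicit Types P K H : {poly F}.

Lemma size_cofactor_leq K H (N : nat) : H != 0 -> (size (K * H)%R <= N)%N ->
  (size K <= N.+1 - size H)%N.
Proof.
have [->|K0 H0] := eqVneq K 0; first by rewrite size_poly0.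
have Hpos : (0 < size H)%N by rewrite size_poly_gt0.
rewrite size_mul //; move: (size K) (size H) Hpos => a b; lia.
Qed.

Lemma dot_coef n (u w : 'rV[F]_n) : (0 < n)%N ->
  dot u w = (rVpoly u * rev_poly n (rVpoly w))`_n.-1.
Proof.
case: n u w => [//|n] u w _; rewrite coefM /dot.
apply: eq_bigr => i _; have := ltn_ord i => ilt.
rewrite coef_rev_poly ifT; last by lia.
by rewrite (_ : (n - (n - i) = i)%N); last lia; rewrite !coef_rVpoly_ord.
Qed.

Lemma rev_polyXnsubC n (c : F) : (0 < n)%N -> rev_poly n.+1 ('X^n - c%:P) = 1 - c *: 'X^n.
Proof.
move=> n_gt0; apply/polyP=> i.
rewrite coef_rev_poly !coefB coefXn coefC coef1 coefZ coefXn.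
case: ltnP => iN /=; last first.
  have i_neq0 : (i == 0)%N = false by apply/eqP; lia.
  have i_neqn : (i == n)%N = false by apply/eqP; lia.
  by rewrite i_neq0 i_neqn mulr0 subr0.
have -> : (n - i == n)%N = (i == 0)%N by apply/eqP/eqP; lia.
have -> : (n - i == 0)%N = (i == n)%N by apply/eqP/eqP; lia.
by case: (i == n); rewrite ?mulr0 ?mulr1.
Qed.

End FieldFacts.

Section FactorXnsubC.
Variables (F : fieldType) (n : nat) (c : F) (g h : {poly F}).
Hypotheses (n_gt0 : (0 < n)%N) (c_neq0 : c != 0) (Egh : g * h = 'X^n - c%:P).

Lemma size_XnsubC_factor : [/\ (0 < size g)%N, (0 < size h)%N &
  ((size g).-1 + (size h).-1 = n)%N].
Proof.
have gh_neq0 : g * h != 0 by rewrite Egh -size_poly_eq0 size_XnsubC.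
have g0 : g != 0 by apply: contraNneq gh_neq0 => ->; rewrite mul0r.
have h0 : h != 0 by apply: contraNneq gh_neq0 => ->; rewrite mulr0.
have g_gt0 : (0 < size g)%N by rewrite size_poly_gt0.
have h_gt0 : (0 < size h)%N by rewrite size_poly_gt0.
split=> //; have := size_mul g0 h0; rewrite Egh size_XnsubC //.
move: (size g) (size h) g_gt0 h_gt0 => a b; lia.
Qed.

Lemma XnsubC_factor_coef0_neq0 : h`_0 != 0.
Proof.
have n_neq0 : (0 == n)%N = false by rewrite eq_sym eqn0Ngt n_gt0.
have := coef0M g h; rewrite Egh coefB coefXn coefC n_neq0 sub0r.
by move=> E; apply: contra_neq c_neq0 => h0; rewrite -[c]opprK E h0 mulr0 oppr0.
Qed.

Lemma recip_XnsubC_factor : recip g * recip h = 1 - c *: 'X^n.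
Proof.
have [g_gt0 h_gt0 Esize] := size_XnsubC_factor.
rewrite !recip_rev_poly -rev_polyM // -rev_polyXnsubC // -Egh.
by congr rev_poly; move: (size g) (size h) g_gt0 h_gt0 Esize => a b; lia.
Qed.

Lemma recip_dvdp_XnsubCV : recip h %| 'X^n - (c^-1)%:P.
Proof.
have -> : 'X^n - (c^-1)%:P = (- c^-1) *: (recip g * recip h).
  rewrite recip_XnsubC_factor scalerBr -mul_polyC mulr1 scalerA mulNr mulVf //.
  by rewrite scaleN1r opprK polyCN addrC.
by rewrite dvdpZr ?oppr_eq0 ?invr_eq0 // dvdp_mulIr.
Qed.

End FactorXnsubC.

Section CyclicDuality.
Variables (F : fieldType) (n : nat) (c : F) (g h : {poly F}).
Hypotheses (n_gt0 : (0 < n)%N) (c_neq0 : c != 0) (Egh : g * h = 'X^n - c%:P).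
Let d := (size g).-1.
Let m := (size h).-1.

Let size_g : size g = d.+1.
Proof. by have [? _ _] := size_XnsubC_factor n_gt0 c_neq0 Egh; rewrite prednK. Qed.

Let size_recip_h : size (recip h) = m.+1.
Proof.
have [_ ? _] := size_XnsubC_factor n_gt0 c_neq0 Egh.
by rewrite size_recip ?(XnsubC_factor_coef0_neq0 n_gt0 c_neq0 Egh) // prednK.
Qed.

Let recip_gh : recip g * recip h = 1 - c *: 'X^n.
Proof. exact: recip_XnsubC_factor. Qed.

Let dm : (d + m)%N = n.
Proof. by have [_ _] := size_XnsubC_factor n_gt0 c_neq0 Egh. Qed.

Lemma rev_poly_mul_factor (k : {poly F}) : (size k <= m)%N ->
  rev_poly n (k * g) = rev_poly m k * recip g.
Proof.
move=> sk; rewrite recip_rev_poly -rev_polyM ?size_g //.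
by congr rev_poly; lia.
Qed.

Lemma orthogonal_dvdp_recip (u w : 'rV[F]_n) :
  recip h %| rVpoly u -> g %| rVpoly w -> dot u w = 0.
Proof.
move=> /dvdpP [K EU] /dvdpP [k Ew].
have rh_neq0 : recip h != 0 by rewrite -size_poly_eq0 size_recip_h.
have g_neq0 : g != 0 by rewrite -size_poly_eq0 size_g.
have sK : (size K <= d)%N.
  have := size_cofactor_leq rh_neq0 (_ : size (K * recip h)%R <= n)%N.
  by rewrite size_recip_h -EU => /(_ (size_rVpoly _)); lia.
have sk : (size k <= m)%N.
  have := size_cofactor_leq g_neq0 (_ : size (k * g)%R <= n)%N.
  by rewrite size_g -Ew => /(_ (size_rVpoly _)); lia.
rewrite dot_coef // Ew rev_poly_mul_factor // EU mulrACA [recip h * _]mulrC.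
rewrite recip_gh mulrBr mulr1 coefB -scalerAr coefZ coefMXn.
rewrite ifT; last by lia.
rewrite mulr0 subr0 nth_default //.
apply: leq_trans (size_polyMleq _ _) _.
by move: (size K) (size (rev_poly m k)) sK (size_rev_poly m k) => a b; lia.
Qed.

Lemma orthogonal_coef_window (u : 'rV[F]_n) :
  (forall w, g %| rVpoly w -> dot u w = 0) ->
  forall i, (d <= i < n)%N -> (rVpoly u * recip g)`_i = 0.
Proof.
move=> u_perp i /andP [di iN]; pose j := (i - d)%N.
have jm : (j < m)%N by rewrite /j; lia.
have sXg : (size ('X^j * g)%R <= n)%N.
  apply: leq_trans (size_polyMleq _ _) _; rewrite size_polyXn size_g; lia.
have := u_perp (poly_rV ('X^j * g)); rewrite poly_rV_K // dvdp_mulIr => /(_ isT).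
rewrite dot_coef // poly_rV_K // rev_poly_mul_factor ?size_polyXn //.
rewrite rev_polyXn // mulrCA coefXnM ifF; last by lia.
by rewrite (_ : (n.-1 - (m.-1 - j) = i)%N) // /j; lia.
Qed.

(* Multiplication by recip h inverts multiplication by recip g modulo x^n. *)
Lemma dvdp_recip_window (U : {poly F}) : (size U <= n)%N ->
  (forall i, (d <= i < n)%N -> (U * recip g)`_i = 0) -> recip h %| U.
Proof.
move=> sU window; set T := take_poly n (U * recip g).
have sT : (size T <= d)%N.
  apply/leq_sizeP => i di; rewrite coef_take_poly.
  by case: ltnP => iN //; apply: window; rewrite di iN.
suff -> : U = T * recip h by rewrite dvdp_mulIr.
have sTh : (size (T * recip h)%R <= n)%N.
  apply: leq_trans (size_polyMleq _ _) _; rewrite size_recip_h.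
  by move: (size T) sT => a; lia.
rewrite -[LHS](take_polyDMXn (- c *: U) sU).
rewrite -[RHS](take_polyDMXn (drop_poly n (U * recip g) * recip h) sTh).
congr take_poly.
rewrite mulrAC -mulrDl poly_take_drop -mulrA recip_gh.
by rewrite scaleNr mulNr -scalerAl scalerAr mulrBr mulr1.
Qed.

Lemma orthogonal_dvdp_recipP (u : 'rV[F]_n) :
  (forall w, g %| rVpoly w -> dot u w = 0) <-> recip h %| rVpoly u.
Proof.
split=> [u_perp|rh_u w]; last exact: orthogonal_dvdp_recip.
exact/dvdp_recip_window/orthogonal_coef_window/u_perp/size_rVpoly.
Qed.

End CyclicDuality.

Lemma card_dvdp_rV (F : finFieldType) n (k : {poly F}) : k != 0 -> (size k <= n.+1)%N ->
  #|[set u : 'rV[F]_n | k %| rVpoly u]| = (#|F| ^ (n.+1 - size k))%N.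
Proof.
move=> k_neq0 sk; set e := (n.+1 - size k)%N.
have k_gt0 : (0 < size k)%N by rewrite size_poly_gt0.
have size_mulk (b : 'rV[F]_e) : (size (rVpoly b * k)%R <= n)%N.
  apply: leq_trans (size_polyMleq _ _) _.
  by rewrite -subn1 leq_subLR add1n -(subnK sk) leq_add2r size_rVpoly.
pose phi (b : 'rV[F]_e) : 'rV[F]_n := poly_rV (rVpoly b * k).
have phi_inj : injective phi.
  move=> b b' /(congr1 rVpoly); rewrite !poly_rV_K // => /(mulIf k_neq0).
  exact: (can_inj (@rVpolyK _ e)).
have -> : [set u : 'rV[F]_n | k %| rVpoly u] = phi @: setT.
  apply/setP => u; rewrite inE; apply/idP/imsetP => [/dvdpP [q Eu]|[b _ ->]].
    have sq : (size q <= e)%N by apply: size_cofactor_leq; rewrite // -Eu size_rVpoly.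
    by exists (poly_rV q); rewrite // /phi poly_rV_K // -Eu rVpolyK.
  by rewrite poly_rV_K // dvdp_mulIr.
by rewrite card_imset // cardsT card_mx mul1n.
Qed.

Lemma in_ideal_map_dvdp (R : comNzRingType) (F : fieldType) (f : {rmorphism R -> F})
    (H : {poly F}) (M : {poly R}) (S : seq {poly R}) (P : {poly R}) :
  H %| map_poly f M -> all (fun s => H %| map_poly f s) S ->
  in_ideal M S P -> H %| map_poly f P.
Proof.
move=> HM /all_nthP HS [a [q ->]]; rewrite rmorphD rmorphM /= rmorph_sum.
apply: dvdp_add; last exact: dvdp_mull.
apply: (big_ind (fun Q => H %| Q)) => [|x y|i _]; [exact: dvdp0 | exact: dvdp_add |].
by rewrite rmorphM; apply/dvdp_mull/HS.
Qed.

Lemma rmorph_mul_eq1 (R : nzRingType) (F : fieldType) (f : {rmorphism R -> F}) (x y : R) :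
  x * y = 1 -> f x != 0 /\ f y = (f x)^-1.
Proof.
move=> /(congr1 f); rewrite rmorphM rmorph1 => fxy; split; last exact/esym/mulr1_eq.
by apply/eqP=> fx0; move: fxy; rewrite fx0 mul0r => /eqP; rewrite eq_sym oner_eq0.
Qed.

Section Components.
Variable p : nat.
Local Notation R := (Rv p).
Local Notation F := 'F_p.

Definition proj_v (x : R) : F := rp x + vp x.
Definition proj_1v (x : R) : F := rp x.

Fact proj_v_is_zmod_morphism : zmod_morphism proj_v.
Proof. by move=> x y; rewrite /proj_v /=; ring. Qed.
Fact proj_v_is_monoid_morphism : monoid_morphism proj_v.
Proof. by split=> [|x y]; rewrite /proj_v /= ?addr0 //; ring. Qed.
HB.instance Definition _ := GRing.isZmodMorphism.Build R F proj_v proj_v_is_zmod_morphism.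
HB.instance Definition _ := GRing.isMonoidMorphism.Build R F proj_v proj_v_is_monoid_morphism.

Fact proj_1v_is_zmod_morphism : zmod_morphism proj_1v.
Proof. by []. Qed.
Fact proj_1v_is_monoid_morphism : monoid_morphism proj_1v.
Proof. by []. Qed.
HB.instance Definition _ := GRing.isZmodMorphism.Build R F proj_1v proj_1v_is_zmod_morphism.
HB.instance Definition _ := GRing.isMonoidMorphism.Build R F proj_1v proj_1v_is_monoid_morphism.

Fact embR_is_zmod_morphism : zmod_morphism (@embR p).
Proof. by move=> x y; apply: Rv_eq; rewrite //= subrr. Qed.
HB.instance Definition _ := GRing.isZmodMorphism.Build F R (@embR p) embR_is_zmod_morphism.

Lemma Rv_decomp (x : R) : x = vR * embR (proj_v x) + (1 - vR) * embR (proj_1v x).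
Proof. by apply: Rv_eq; rewrite /proj_v /proj_1v /=; ring. Qed.

Lemma Rv_eq0P (x : R) : x = 0 <-> proj_v x = 0 /\ proj_1v x = 0.
Proof.
split=> [->|[]]; first by rewrite !rmorph0.
rewrite /proj_v /proj_1v => x1 x0; apply: Rv_eq => //.
by rewrite -[vp x](addKr (rp x)) x1 x0 oppr0 addr0.
Qed.

Definition join_poly (A B : {poly F}) : {poly R} :=
  vR%:P * liftR A + (1 - vR)%:P * liftR B.
Arguments join_poly : simpl never.

Lemma map_proj_v_join A B : map_poly proj_v (join_poly A B) = A.
Proof.
apply/polyP=> i; rewrite coef_map coefD !coefCM !coef_map /=.
by rewrite /proj_v /=; ring.
Qed.

Lemma map_proj_1v_join A B : map_poly proj_1v (join_poly A B) = B.
Proof.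
apply/polyP=> i; rewrite coef_map coefD !coefCM !coef_map /=.
by rewrite /proj_1v /=; ring.
Qed.

Lemma join_poly_components (P : {poly R}) :
  join_poly (map_poly proj_v P) (map_poly proj_1v P) = P.
Proof.
apply/polyP=> i; rewrite coefD !coefCM !coef_map /=.
exact/esym/Rv_decomp.
Qed.

Lemma eq_join_poly (P : {poly R}) A B :
  map_poly proj_v P = A -> map_poly proj_1v P = B -> P = join_poly A B.
Proof. by move=> <- <-; rewrite join_poly_components. Qed.

Lemma join_polyD A B C D : join_poly A B + join_poly C D = join_poly (A + C) (B + D).
Proof.
by apply: eq_join_poly; rewrite rmorphD /= ?map_proj_v_join ?map_proj_1v_join.
Qed.

Lemma join_polyM A B C D : join_poly A B * join_poly C D = join_poly (A * C) (B * D).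
Proof.
by apply: eq_join_poly; rewrite rmorphM /= ?map_proj_v_join ?map_proj_1v_join.
Qed.

End Components.

Arguments proj_v {p}.
Arguments proj_1v {p}.

Section ComponentIdeals.
Variables (p n : nat) (t : Rv p) (H1 H0 : {poly 'F_p}).
Hypotheses (H1_dvd : H1 %| 'X^n - (proj_v t)%:P) (H0_dvd : H0 %| 'X^n - (proj_1v t)%:P).
Local Notation M := ('X^n - t%:P).

Let join_poly_vpart : join_poly H1 0 = vR%:P * liftR H1.
Proof. by rewrite /join_poly /liftR raddf0 mulr0 addr0. Qed.

Let join_poly_1vpart : join_poly 0 H0 = (1 - vR)%:P * liftR H0.
Proof. by rewrite /join_poly /liftR raddf0 mulr0 add0r. Qed.

Let in_ideal_components (S : seq {poly Rv p}) (P : {poly Rv p}) :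
  all (fun s : {poly Rv p} => H1 %| map_poly proj_v s) S ->
  all (fun s : {poly Rv p} => H0 %| map_poly proj_1v s) S ->
  in_ideal M S P -> H1 %| map_poly proj_v P /\ H0 %| map_poly proj_1v P.
Proof.
move=> S1 S0 PS; split; apply: in_ideal_map_dvdp PS => //.
  by rewrite rmorphB /= map_polyXn map_polyC.
by rewrite rmorphB /= map_polyXn map_polyC.
Qed.

Let in_ideal_join (S : seq {poly Rv p}) (P : {poly Rv p}) (k1 k0 : {poly 'F_p}) :
  map_poly proj_v P = k1 * H1 -> map_poly proj_1v P = k0 * H0 ->
  \sum_(i < size S) S`_i = join_poly H1 H0 -> in_ideal M S P.
Proof.
move=> E1 E0 ES; exists (fun=> join_poly k1 k0), 0.
by rewrite mul0r addr0 -mulr_sumr ES join_polyM -E1 -E0 join_poly_components.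
Qed.

Lemma in_ideal_pairP (P : {poly Rv p}) :
  in_ideal M [:: vR%:P * liftR H1; (1 - vR)%:P * liftR H0] P <->
  H1 %| map_poly proj_v P /\ H0 %| map_poly proj_1v P.
Proof.
rewrite -join_poly_vpart -join_poly_1vpart; split.
  apply: in_ideal_components => /=;
    by rewrite !(map_proj_v_join, map_proj_1v_join) dvdpp dvdp0.
case=> /dvdpP [k1 E1] /dvdpP [k0 E0]; apply: (in_ideal_join E1 E0).
by rewrite !big_ord_recl big_ord0 addr0 join_polyD addr0 add0r.
Qed.

Lemma in_ideal_sumP (P : {poly Rv p}) :
  in_ideal M [:: vR%:P * liftR H1 + (1 - vR)%:P * liftR H0] P <->
  H1 %| map_poly proj_v P /\ H0 %| map_poly proj_1v P.
Proof.
rewrite -[vR%:P * _ + _]/(join_poly H1 H0); split.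
  apply: in_ideal_components => /=;
    by rewrite !(map_proj_v_join, map_proj_1v_join) dvdpp.
case=> /dvdpP [k1 E1] /dvdpP [k0 E0]; apply: (in_ideal_join E1 E0).
by rewrite big_ord_recl big_ord0 addr0.
Qed.

End ComponentIdeals.

Section ComponentCodes.
Variables (p n : nat).
Local Notation R := (Rv p).
Local Notation F := 'F_p.

Definition join_rV (a b : 'rV[F]_n) : 'rV[R]_n := \row_i MkRv (b 0 i) (a 0 i - b 0 i).

Lemma map_proj_v_join_rV a b : map_mx proj_v (join_rV a b) = a.
Proof. by apply/rowP=> i; rewrite !mxE /proj_v /= addrC subrK. Qed.

Lemma map_proj_1v_join_rV a b : map_mx proj_1v (join_rV a b) = b.
Proof. by apply/rowP=> i; rewrite !mxE. Qed.

Lemma join_rV_components (c : 'rV[R]_n) :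
  join_rV (map_mx proj_v c) (map_mx proj_1v c) = c.
Proof. by apply/rowP=> i; rewrite !mxE; apply: Rv_eq; rewrite //= /proj_v /proj_1v addrC addKr. Qed.

Lemma dualcode_componentsP (C : {set 'rV[R]_n}) (A B : 'rV[F]_n -> Prop) :
  A 0 -> B 0 ->
  (forall c, c \in C <-> A (map_mx proj_v c) /\ B (map_mx proj_1v c)) ->
  forall c, c \in dualcode C <->
    (forall w, A w -> dot (map_mx proj_v c) w = 0) /\
    (forall w, B w -> dot (map_mx proj_1v c) w = 0).
Proof.
move=> A0 B0 memC c; rewrite inE; split=> [/forallP c_perp | [c_perp1 c_perp0]].
  split=> w Aw.
    have /memC : A (map_mx proj_v (join_rV w 0)) /\ B (map_mx proj_1v (join_rV w 0)).
      by rewrite map_proj_v_join_rV map_proj_1v_join_rV.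
    move=> /idP wC; have /implyP/(_ wC)/eqP := c_perp (join_rV w 0).
    by move/(congr1 proj_v); rewrite (rmorph_dot proj_v) map_proj_v_join_rV rmorph0.
  have /memC : A (map_mx proj_v (join_rV 0 w)) /\ B (map_mx proj_1v (join_rV 0 w)).
    by rewrite map_proj_v_join_rV map_proj_1v_join_rV.
  move=> /idP wC; have /implyP/(_ wC)/eqP := c_perp (join_rV 0 w).
  by move/(congr1 proj_1v); rewrite (rmorph_dot proj_1v) map_proj_1v_join_rV rmorph0.
apply/forallP=> d; apply/implyP=> /memC [dA dB]; apply/eqP/Rv_eq0P.
by rewrite (rmorph_dot proj_v) (rmorph_dot proj_1v) c_perp1 ?c_perp0.
Qed.

Lemma card_components (D : {set 'rV[R]_n}) (A B : {set 'rV[F]_n}) :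
  (forall c, c \in D <-> map_mx proj_v c \in A /\ map_mx proj_1v c \in B) ->
  #|D| = (#|A| * #|B|)%N.
Proof.
move=> memD; pose f (c : 'rV[R]_n) := (map_mx proj_v c, map_mx proj_1v c).
have f_inj : injective f.
  by move=> c c' [Ev E1v]; rewrite -[c]join_rV_components -[c']join_rV_components Ev E1v.
rewrite -cardsX -(card_imset _ f_inj); congr #|pred_of_set _|.
apply/setP=> -[a b]; rewrite !inE /=; apply/imsetP/andP => [[c /memD [cA cB] [-> ->]] // | [aA bB]].
by exists (join_rV a b); rewrite ?memD /f ?map_proj_v_join_rV ?map_proj_1v_join_rV.
Qed.

End ComponentCodes.

Lemma XnsubC_in_ideal (F : fieldType) n (z : F) : z != 0 ->
  exists a q : {poly F}, 'X^n - z%:P = a * ('X^n - (z^-1)%:P) + q * ('X^(2 * n) - 1).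
Proof.
move=> z_neq0; set y := z^-1.
have [yy1|yy_neq1] := eqVneq (y * y) 1.
  exists 1, 0; rewrite mul1r mul0r addr0; congr (_ - _%:P).
  by rewrite -[z]invrK -/y (mulr1_eq yy1).
(* X^2n - 1 = (X^n - y)(X^n + y) + (y^2 - 1), and y^2 - 1 is a unit *)
have k_neq0 : y * y - 1 != 0 by rewrite subr_eq0.
set k := (y * y - 1)^-1.
have kE : k%:P * (y%:P * y%:P - 1) = 1 :> {poly F}.
  by rewrite -polyCM -polyC1 -polyCB -polyCM mulVf.
exists (- (k%:P * ('X^n - z%:P) * ('X^n + y%:P))), (k%:P * ('X^n - z%:P)).
rewrite mul2n -addnn exprD -[LHS]mul1r -[in LHS]kE.
ring.
Qed.

Section HStar.
Variable p : nat.
Implicit Types h P : {poly 'F_p}.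

Lemma dvdp_hstar h P : h`_0 != 0 -> (hstar h %| P) = (recip h %| P).
Proof. by move=> h0; rewrite /hstar dvdpZl ?invr_eq0. Qed.

Lemma size_hstar h : h`_0 != 0 -> size (hstar h) = size h.
Proof. by move=> h0; rewrite /hstar size_scale ?invr_eq0 // size_recip. Qed.

Section HStarFactor.
Variables (n : nat) (c : 'F_p) (g h : {poly 'F_p}).
Hypotheses (n_gt0 : (0 < n)%N) (c_neq0 : c != 0) (Egh : g * h = 'X^n - c%:P).

Lemma hstar_dvdp_XnsubCV : hstar h %| 'X^n - (c^-1)%:P.
Proof.
rewrite dvdp_hstar ?(XnsubC_factor_coef0_neq0 n_gt0 c_neq0 Egh) //.
exact: recip_dvdp_XnsubCV n_gt0 c_neq0 Egh.
Qed.

Lemma card_dvdp_hstar : prime p ->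
  #|[set u : 'rV_n | hstar h %| rVpoly u]| = (p ^ (size g).-1)%N.
Proof.
move=> p_pr; have h_coef0 := XnsubC_factor_coef0_neq0 n_gt0 c_neq0 Egh.
have [g_gt0 h_gt0 Esize] := size_XnsubC_factor n_gt0 c_neq0 Egh.
have hs_neq0 : hstar h != 0 by rewrite -size_poly_eq0 size_hstar // -lt0n.
have sh : (size h <= n.+1)%N by move: (size g) (size h) g_gt0 Esize => a b; lia.
rewrite card_dvdp_rV // ?size_hstar //; congr expn; first exact: card_Fp.
by move: (size g) (size h) g_gt0 h_gt0 Esize => a b; lia.
Qed.

End HStarFactor.

End HStar.

Section DualComponentCode.
Variables (p n : nat) (c1 c0 : 'F_p) (g1 h1 g0 h0 : {poly 'F_p}).
Variable C : {set 'rV[Rv p]_n}.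
Hypotheses (n_gt0 : (0 < n)%N) (c1_neq0 : c1 != 0) (c0_neq0 : c0 != 0).
Hypotheses (E1 : g1 * h1 = 'X^n - c1%:P) (E0 : g0 * h0 = 'X^n - c0%:P).
Hypothesis memC : forall c,
  c \in C <-> g1 %| rVpoly (map_mx proj_v c) /\ g0 %| rVpoly (map_mx proj_1v c).

Lemma mem_dualcode_hstar c : c \in dualcode C <->
  hstar h1 %| rVpoly (map_mx proj_v c) /\ hstar h0 %| rVpoly (map_mx proj_1v c).
Proof.
have dvdp_rV0 (k : {poly 'F_p}) : k %| rVpoly (0 : 'rV_n) by rewrite linear0 dvdp0.
rewrite (dualcode_componentsP (A := fun w => g1 %| rVpoly w) (B := fun w => g0 %| rVpoly w)
  (dvdp_rV0 g1) (dvdp_rV0 g0) memC).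
rewrite !dvdp_hstar ?(XnsubC_factor_coef0_neq0 n_gt0 c1_neq0 E1)
  ?(XnsubC_factor_coef0_neq0 n_gt0 c0_neq0 E0) //.
by rewrite -(orthogonal_dvdp_recipP n_gt0 c1_neq0 E1) -(orthogonal_dvdp_recipP n_gt0 c0_neq0 E0).
Qed.

Lemma card_dualcode_hstar : prime p ->
  #|dualcode C| = (p ^ ((size g1).-1 + (size g0).-1))%N.
Proof.
move=> p_pr; rewrite (card_components (A := [set u | hstar h1 %| rVpoly u])
  (B := [set u | hstar h0 %| rVpoly u])); last by move=> c; rewrite mem_dualcode_hstar !inE.
by rewrite (card_dvdp_hstar n_gt0 c1_neq0 E1) ?(card_dvdp_hstar n_gt0 c0_neq0 E0) // -expnD.
Qed.

End DualComponentCode.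

Section GrayImage.
Variables (p n : nat) (lam mu : 'F_p).

Lemma gray_components (c : 'rV[Rv p]_n) :
  let S := rVpoly (map_mx proj_v c) in let T := rVpoly (map_mx proj_1v c) in
  gray lam mu c = (lam * (lam + mu)) *: (S - T) + 'X^n * (- (mu *: T) - (lam + mu) *: (S - T)).
Proof.
have Er : \sum_(i < n) rp (c 0 i) *: 'X^i = rVpoly (map_mx proj_1v c).
  by rewrite -vpoly_rVpoly; apply: eq_bigr => i _; rewrite mxE.
have Eq : \sum_(i < n) vp (c 0 i) *: 'X^i =
    rVpoly (map_mx proj_v c) - rVpoly (map_mx proj_1v c).
  rewrite -!vpoly_rVpoly -sumrB; apply: eq_bigr => i _.
  by rewrite !mxE -scalerBl /proj_v /proj_1v addrAC subrr add0r.
by rewrite /gray Er Eq.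
Qed.

Lemma gray_in_ideal (A B : {poly 'F_p}) (c : 'rV[Rv p]_n) :
  lam != 0 -> lam + mu != 0 ->
  A %| 'X^n - ((lam + mu)^-1)%:P -> B %| 'X^n - (lam^-1)%:P ->
  A %| rVpoly (map_mx proj_v c) -> B %| rVpoly (map_mx proj_1v c) ->
  in_ideal ('X^(2 * n) - 1) [:: A * B] (gray lam mu c).
Proof.
move=> lam_neq0 lm_neq0 /dvdpP [KA EA] /dvdpP [KB EB] /dvdpP [a Ea] /dvdpP [b Eb].
have [a1 [q1 E1]] := XnsubC_in_ideal n lam_neq0.
have [a2 [q2 E2]] := XnsubC_in_ideal n lm_neq0.
exists (fun=> - (lam + mu)%:P * a * a1 * KB + lam%:P * b * a2 * KA).
exists (- (lam + mu)%:P * a * A * q1 + lam%:P * b * B * q2).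
rewrite big_ord_recl big_ord0 addr0 gray_components /= Ea Eb.
transitivity (- (lam + mu)%:P * a * A * ('X^n - lam%:P) +
              lam%:P * b * B * ('X^n - (lam + mu)%:P)).
  by rewrite -!mul_polyC !polyCM !polyCD; ring.
by rewrite E1 E2 EA EB; ring.
Qed.

End GrayImage.

Theorem theorem3p16 (p : nat) (n : nat) (lam mu : 'F_p) (thetainv : Rv p)
    (C : {set 'rV[Rv p]_n}) (g1 g2 h1 h2 : {poly 'F_p}) :
  prime p -> odd p -> (0 < n)%N ->
  MkRv lam mu * thetainv = 1 ->
  constacyclic (MkRv lam mu) C ->
  (forall c, c \in C <->
     in_ideal ('X^n - (MkRv lam mu)%:P)
       [:: vR%:P * liftR g1; (1 - vR)%:P * liftR g2] (vpoly c)) ->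
  (g1 \is monic \/ g1 = 0) -> (g2 \is monic \/ g2 = 0) ->
  (g1 != 0 -> g1 %| 'X^n - (lam + mu)%:P) ->
  (g2 != 0 -> g2 %| 'X^n - lam%:P) ->
  g1 * h1 = 'X^n - (lam + mu)%:P ->
  g2 * h2 = 'X^n - lam%:P ->
  [/\ (forall c, c \in dualcode C <->
         in_ideal ('X^n - thetainv%:P)
           [:: vR%:P * liftR (hstar h1); (1 - vR)%:P * liftR (hstar h2)] (vpoly c))
      /\ #|dualcode C| = (p ^ ((size g1).-1 + (size g2).-1))%N,
      (forall c, c \in dualcode C <->
         in_ideal ('X^n - thetainv%:P)
           [:: vR%:P * liftR (hstar h1) + (1 - vR)%:P * liftR (hstar h2)] (vpoly c)) &
      (forall c, c \in dualcode C ->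
         in_ideal ('X^(2 * n) - 1) [:: hstar h1 * hstar h2] (gray lam mu c))].
Proof.
move=> p_pr _ n_gt0 theta_inv _ memC _ _ _ _ E1 E2.
have [lm_neq0 inv_v] := rmorph_mul_eq1 proj_v theta_inv.
have [lam_neq0 inv_1v] := rmorph_mul_eq1 proj_1v theta_inv.
have memC_components c : c \in C <->
    g1 %| rVpoly (map_mx proj_v c) /\ g2 %| rVpoly (map_mx proj_1v c).
  by rewrite memC vpoly_rVpoly in_ideal_pairP -?E1 -?E2 ?dvdp_mulIl // !map_rVpoly.
have mem_dual := mem_dualcode_hstar n_gt0 lm_neq0 lam_neq0 E1 E2 memC_components.
have H1_dvd := hstar_dvdp_XnsubCV n_gt0 lm_neq0 E1.
have H2_dvd := hstar_dvdp_XnsubCV n_gt0 lam_neq0 E2.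
have dvd1 : hstar h1 %| 'X^n - (proj_v thetainv)%:P by rewrite inv_v.
have dvd2 : hstar h2 %| 'X^n - (proj_1v thetainv)%:P by rewrite inv_1v.
split; first split.
- by move=> c; rewrite mem_dual vpoly_rVpoly (in_ideal_pairP dvd1 dvd2) !map_rVpoly.
- exact: card_dualcode_hstar n_gt0 lm_neq0 lam_neq0 E1 E2 memC_components p_pr.
- by move=> c; rewrite mem_dual vpoly_rVpoly (in_ideal_sumP dvd1 dvd2) !map_rVpoly.
- by move=> c /mem_dual [d1 d2]; apply: gray_in_ideal.
Qed.
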